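(* Let $n\ge1$, $\mathfrak g=\mathfrak{osp}(1,2n)\subset\mathfrak{gl}(1,2n)$, and $p\ge0$. Then: (1) for all homogeneous $X_1,\ldots,X_{2p+1}\in\mathfrak g$, $\mathcal P_{2p+1}(X_1,\ldots,X_{2p+1})\in\mathfrak g$; (2) for all homogeneous $X_1,\ldots,X_{4p+1}\in\mathfrak g$, $\mathcal A_{4p+1}(X_1,\ldots,X_{4p+1})\in\mathfrak g$; (3) for all homogeneous $X_1,\ldots,X_{4p+2}\in\mathfrak g$, $\mathcal A_{4p+2}(X_1,\ldots,X_{4p+2})\in\mathfrak g$.
   Context: $V=V_{\bar0}\oplus V_{\bar1}$ with $\dim V_{\bar0}=1$, $\dim V_{\bar1}=2n$, $\mathfrak{gl}(1,2n)=\mathrm{End}(V)$ with the natural grading, products being compositions. Let $\beta$ be an even nondegenerate bilinear form on $V$, symmetric on $V_{\bar0}$, symplectic on $V_{\bar1}$, $\beta(V_{\bar0},V_{\bar1})=0$; $\mathfrak{osp}(1,2n)$ is the span of homogeneous $X\in\mathrm{End}(V)$ with $\beta(XY,Z)+(-1)^{xy}\beta(Y,XZ)=0$ for all homogeneous $Y,Z$. For homogeneous $\mathcal X=(X_1,\dots,X_m)$ and $\sigma\in\mathfrak S_m$, $\epsilon(\sigma)$ is the sign and $\epsilon(\sigma,\mathcal X)=(-1)^K$ with $K$ the number of pairs $i<j$ with $\sigma(i)>\sigma(j)$ and $X_{\sigma(i)},X_{\sigma(j)}$ both odd. $\mathcal P_m(X_1,\dots,X_m)=\sum_{\sigma\in\mathfrak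 S_m}\epsilon(\sigma,\mathcal X)X_{\sigma(1)}\cdots X_{\sigma(m)}$ and $\mathcal A_m(X_1,\dots,X_m)=\sum_\sigma\epsilon(\sigma)\epsilon(\sigma,\mathcal X)X_{\sigma(1)}\cdots X_{\sigma(m)}$. *)

(* V = F^(1|2n) realised as column vectors indexed by 'I_(2n+1);
   index 0 spans V_0 (even), indices 1..2n span V_1 (odd). *)
From mathcomp Require Import all_boot all_order fingroup perm all_algebra.
Set Implicit Arguments. Unset Strict Implicit. Unset Printing Implicit Defensive.
Import GRing.Theory.
Local Open Scope ring_scope.

Section Super.
Variables (F : fieldType) (n : nat).
Local Notation N := (n.*2).+1.

Definition idx_par (i : 'I_N) : bool := (i != 0 :> nat).

Definition homog_vec (c : bool) (u : 'cV[F]_N) : Prop :=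
  forall i, idx_par i != c -> u i 0 = 0.

Definition homog_mx (b : bool) (A : 'M[F]_N) : Prop :=
  forall i j, (idx_par i (+) idx_par j) != b -> A i j = 0.

Definition beta (B : 'M[F]_N) (u v : 'cV[F]_N) : F := (u^T *m B *m v) 0 0.

Definition osp_form (B : 'M[F]_N) : Prop :=
  [/\ B \in unitmx,
      (forall i j, idx_par i != idx_par j -> B i j = 0),
      (forall i j, ~~ idx_par i -> ~~ idx_par j -> B j i = B i j),
      (forall i j, idx_par i -> idx_par j -> B j i = - B i j) &
      (forall i, idx_par i -> B i i = 0)].

Definition osp_cond (B : 'M[F]_N) (b : bool) (X : 'M[F]_N) : Prop :=
  forall (c c' : bool) (u v : 'cV[F]_N), homog_vec c u -> homog_vec c' v ->
    beta B (X *m u) v + (-1) ^+ (b && c) * beta B u (X *m v) = 0.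

(* osp(1,2n): the span of the homogeneous X satisfying the condition;
   since each parity-component is a subspace, the span is their sum *)
Definition in_osp (B : 'M[F]_N) (X : 'M[F]_N) : Prop :=
  exists X0 X1, [/\ X = X0 + X1,
    homog_mx false X0, osp_cond B false X0,
    homog_mx true X1 & osp_cond B true X1].

Definition inv_odd m (d : 'I_m -> bool) (s : 'S_m) : nat :=
  #|[set ij : 'I_m * 'I_m | [&& (ij.1 < ij.2)%N, (s ij.2 < s ij.1)%N,
                               d (s ij.1) & d (s ij.2)]]|.

Definition eps_sX m (d : 'I_m -> bool) (s : 'S_m) : F := (-1) ^+ inv_odd d s.

(* P_m and A_m; d i is the parity of X i *)
Definition Pm m (d : 'I_m -> bool) (X : 'I_m -> 'M[F]_N) : 'M[F]_N :=
  \sum_(s : 'S_m) eps_sX d s *: \prod_(i < m) X (s i).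

Definition Am m (d : 'I_m -> bool) (X : 'I_m -> 'M[F]_N) : 'M[F]_N :=
  \sum_(s : 'S_m) ((-1) ^+ (odd_perm s) * eps_sX d s) *: \prod_(i < m) X (s i).

Definition homog_osp_family B m (d : 'I_m -> bool) (X : 'I_m -> 'M[F]_N) : Prop :=
  forall i, homog_mx (d i) (X i) /\ in_osp B (X i).

End Super.

(* With J the parity operator, a homogeneous X of degree b lies in osp iff
   X^T B = - J^b B X.  Iterating this, a product of homogeneous elements of osp
   satisfies (X_1 ... X_m)^T B = (-1)^m (-1)^T J^w B X_m ... X_1, where w is the
   total parity and T the number of pairs of odd factors (the Koszul sign of
   reversing the word).  Hence the reindexing s |-> rev o s of the permutation
   sums pairs each term with its reversal, and P_m, A_m lie in osp as soon as
   their coefficients satisfy a(rev o s) = - (-1)^m (-1)^T a(s).  Since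
   inv_odd(s) + inv_odd(rev o s) = T, this holds for P_m when m is odd, and,
   the sign of rev being (-1)^(m(m-1)/2), for A_m when m = 1, 2 mod 4. *)

From mathcomp Require Import all_boot all_order fingroup perm all_algebra zify ring.
Import GRing.Theory.
Local Open Scope ring_scope.
Set Implicit Arguments. Unset Strict Implicit.

Definition rev_perm m : 'S_m := perm (@rev_ord_inj m).

Definition odd_pairs m (y : 'I_m -> bool) : nat :=
  (\sum_(i < m) \sum_(j < m) ((i < j)%N && y i && y j : nat))%N.

Lemma card_pairs m (P : pred ('I_m * 'I_m)) :
  #|[set ij | P ij]| = (\sum_i \sum_j P (i, j))%N.
Proof.
rewrite -sum1dep_card big_mkcond /= pair_big /=.
by apply: eq_bigr => -[i j] _ /=; case: (P (i, j)).
Qed.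

Lemma inv_odd_rev_perm m (d : 'I_m -> bool) (s : 'S_m) :
  (inv_odd d s + inv_odd d (rev_perm m * s)%g)%N = odd_pairs (fun i => d (s i)).
Proof.
rewrite /inv_odd !card_pairs /odd_pairs [X in (_ + X)%N](reindex_inj rev_ord_inj) /=.
rewrite [X in (_ + X)%N](eq_bigr (fun i : 'I_m => \sum_(j < m)
    ((j < i)%N && (s j < s i)%N && d (s i) && d (s j) : nat))%N); last first.
  move=> i _; rewrite (reindex_inj rev_ord_inj) /=; apply: eq_bigr => j _.
  have -> : (rev_ord i < rev_ord j)%N = (j < i)%N by rewrite /= ltn_sub2lE.
  by rewrite !permM !permE !rev_ordK !andbA.
rewrite [X in (_ + X)%N]exchange_big -big_split /=.
apply: eq_bigr => i _; rewrite -big_split /=; apply: eq_bigr => j _.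
case: ltngtP => [i_lt_j|//|/val_inj->]; last by rewrite ltnn.
have sj_neq_si : s j != s i :> nat.
  by rewrite val_eqE (inj_eq perm_inj); apply: contraTneq i_lt_j => ->; rewrite ltnn.
by case: ltngtP sj_neq_si => // _ _; case: (d (s i)); case: (d (s j)).
Qed.

Lemma odd_pairs_recl m (y : 'I_m.+1 -> bool) :
  odd_pairs y =
    (y ord0 * \sum_(j < m) y (lift ord0 j) + odd_pairs (fun i => y (lift ord0 i)))%N.
Proof.
rewrite /odd_pairs big_ord_recl big_ord_recl /= big_distrr /=; congr (_ + _)%N.
  by rewrite add0n; apply: eq_bigr => j _; case: (y ord0); case: (y _).
apply: eq_bigr => i _; rewrite big_ord_recl /= add0n.
by apply: eq_bigr => j _; rewrite /bump /= ltnS.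
Qed.

Lemma odd_rev_perm m : odd_perm (rev_perm m) = odd 'C(m, 2).
Proof.
elim: m => [|m IHm]; first by rewrite (_ : rev_perm 0 = 1%g) ?odd_perm1 //; apply/permP => -[].
have -> : rev_perm m.+1 = lift_perm ord0 ord_max (rev_perm m).
  apply/permP => i; case: (unliftP ord0 i) => [j ->|->].
    rewrite lift_perm_lift !permE; apply: val_inj; rewrite /= /bump /=.
    by have := ltn_ord j; lia.
  by rewrite lift_perm_id permE; apply: val_inj; rewrite /= subn1.
by rewrite odd_lift_perm IHm binS bin1 oddD /= addbC.
Qed.

Lemma odd_bin2 m : odd 'C(m, 2) = odd m./2.
Proof.
elim: m => [//|m IHm].
by rewrite binS bin1 oddD IHm -uphalfE uphalf_half oddD oddb addbC.
Qed.

Lemma eps_sX_rev_perm (F : fieldType) m (d : 'I_m -> bool) (s : 'S_m) :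
  eps_sX F d (rev_perm m * s)%g = eps_sX F d s * (-1) ^+ odd_pairs (fun i => d (s i)).
Proof. by rewrite -inv_odd_rev_perm /eps_sX exprD mulrA -expr2 sqrr_sign mul1r. Qed.

Section OspAdjoint.
Variables (F : fieldType) (n : nat).
Local Notation N := (n.*2).+1.
Implicit Types (B M X : 'M[F]_N) (u v : 'cV[F]_N) (a b c : bool).

Lemma homog_mx0 b : homog_mx b (0 : 'M[F]_N).
Proof. by move=> i j _; rewrite mxE. Qed.

Lemma homog_mx1 : homog_mx false (1%:M : 'M[F]_N).
Proof. by move=> i j; rewrite mxE; case: (eqVneq i j) => [->|//]; rewrite addbb. Qed.

Lemma homog_mxD b M X : homog_mx b M -> homog_mx b X -> homog_mx b (M + X).
Proof. by move=> hM hX i j h; rewrite mxE hM // hX // addr0. Qed.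

Lemma homog_mxN b M : homog_mx b M -> homog_mx b (- M).
Proof. by move=> hM i j h; rewrite mxE hM // oppr0. Qed.

Lemma homog_mxZ b (k : F) M : homog_mx b M -> homog_mx b (k *: M).
Proof. by move=> hM i j h; rewrite mxE hM // mulr0. Qed.

Lemma homog_mx_sum b I (r : seq I) (P : pred I) (G : I -> 'M[F]_N) :
  (forall i, homog_mx b (G i)) -> homog_mx b (\sum_(i <- r | P i) G i).
Proof. by move=> hG; apply: big_ind => //; [apply: homog_mx0 | apply: homog_mxD]. Qed.

Lemma homog_mx_tr b M : homog_mx b M -> homog_mx b M^T.
Proof. by move=> hM i j h; rewrite mxE hM // addbC. Qed.

Lemma homog_mxM a b M X : homog_mx a M -> homog_mx b X -> homog_mx (a (+) b) (M *m X).
Proof.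
move=> hM hX i j h; rewrite mxE big1 // => k _.
case: (eqVneq (idx_par i (+) idx_par k) a) => [e|]; last by move/hM->; rewrite mul0r.
rewrite hX ?mulr0 //; apply: contra h => /eqP <-; rewrite -e.
by case: (idx_par i); case: (idx_par k); case: (idx_par j).
Qed.

Lemma homog_mx_eq0 b M : homog_mx b M -> homog_mx (~~ b) M -> M = 0.
Proof.
move=> hb hNb; apply/matrixP => i j; rewrite mxE.
case: (eqVneq (idx_par i (+) idx_par j) b) => [e|]; last exact: hb.
by apply: hNb; rewrite e; case: (b).
Qed.

Lemma homog_mx_prod m (y : 'I_m -> bool) (Y : 'I_m -> 'M[F]_N) :
  (forall i, homog_mx (y i) (Y i)) -> homog_mx (odd (\sum_i y i)%N) (\prod_i Y i).
Proof.
elim: m y Y => [|m IHm] y Y hY; first by rewrite !big_ord0; apply: homog_mx1.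
rewrite !big_ord_recl oddD oddb; apply: homog_mxM => //.
exact: IHm (fun i => hY _).
Qed.

Definition sign_mx b : 'M[F]_N := diag_mx (\row_i (-1) ^+ (b && idx_par i)).

Lemma sign_mxE b k (M : 'M[F]_(N, k)) i j :
  (sign_mx b *m M) i j = (-1) ^+ (b && idx_par i) * M i j.
Proof. by rewrite mul_diag_mx !mxE. Qed.

Lemma sign_mx0 : sign_mx false = 1%:M.
Proof. by apply/matrixP => i j; rewrite !mxE. Qed.

Lemma sign_mxD a b : sign_mx (a (+) b) = sign_mx a *m sign_mx b.
Proof.
apply/matrixP => i j.
by rewrite sign_mxE !mxE mulrnAr andb_addl signr_addb.
Qed.

Lemma tr_sign_mx b : (sign_mx b)^T = sign_mx b.
Proof. exact: tr_diag_mx. Qed.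

Lemma sign_mx_homog_vec b c (u : 'cV[F]_N) :
  homog_vec c u -> sign_mx b *m u = (-1) ^+ (b && c) *: u.
Proof.
move=> hu; apply/matrixP => i j; rewrite (ord1 j) sign_mxE mxE.
by case: (eqVneq (idx_par i) c) => [->//|/hu->]; rewrite !mulr0.
Qed.

Lemma homog_mx_sign_comm b c M :
  homog_mx c M -> M *m sign_mx b = (-1) ^+ (c && b) *: (sign_mx b *m M).
Proof.
move=> hM; apply/matrixP => i j; rewrite [RHS]mxE sign_mxE mul_mx_diag !mxE.
case: (eqVneq (idx_par i (+) idx_par j) c) => [<-|/hM->]; last by rewrite !(mulr0, mul0r).
rewrite mulrA mulrC -!signr_addb; congr ((-1) ^+ _ * _).
by case: b; case: (idx_par i); case: (idx_par j).
Qed.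

Lemma betaD M X u v : beta (M + X) u v = beta M u v + beta X u v.
Proof. by rewrite /beta mulmxDr mulmxDl mxE. Qed.

Lemma beta0 u v : beta 0 u v = 0.
Proof. by rewrite /beta mulmx0 mul0mx mxE. Qed.

Lemma beta_mulmxl M X u v : beta M (X *m u) v = beta (X^T *m M) u v.
Proof. by rewrite /beta trmx_mul !mulmxA. Qed.

Lemma beta_mulmxr M X u v : beta M u (X *m v) = beta (M *m X) u v.
Proof. by rewrite /beta !mulmxA. Qed.

Lemma beta_sign_mx b c M u v :
  homog_vec c u -> beta (sign_mx b *m M) u v = (-1) ^+ (b && c) * beta M u v.
Proof.
move=> hu; rewrite /beta mulmxA -[u^T *m _]trmxK trmx_mul trmxK tr_sign_mx.
by rewrite (sign_mx_homog_vec b hu) linearZ /= -!scalemxAl mxE.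
Qed.

Lemma beta_delta M i j : beta M (delta_mx i 0) (delta_mx j 0) = M i j.
Proof. by rewrite /beta trmx_delta -rowE -colE !mxE. Qed.

Lemma homog_vec_delta i : homog_vec (idx_par i) (delta_mx i 0 : 'cV[F]_N).
Proof. by move=> k; rewrite mxE; case: (eqVneq k i) => [->|]; rewrite ?eqxx. Qed.

Definition osp_mx B b X := X^T *m B = - (sign_mx b *m B *m X).

Lemma osp_condP B b X : osp_cond B b X <-> osp_mx B b X.
Proof.
have sumE c u v : homog_vec c u ->
    beta B (X *m u) v + (-1) ^+ (b && c) * beta B u (X *m v) =
    beta (X^T *m B + sign_mx b *m B *m X) u v.
  by move=> hu; rewrite betaD beta_mulmxl beta_mulmxr -mulmxA (beta_sign_mx b _ _ hu).
split => [hX | hX c c' u v hu _]; last by rewrite (sumE c) // hX addNr beta0.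
apply/eqP; rewrite -addr_eq0; apply/eqP/matrixP => i j.
rewrite [RHS]mxE -beta_delta -(sumE _ _ _ (@homog_vec_delta i)).
exact: hX (@homog_vec_delta i) (@homog_vec_delta j).
Qed.

Lemma osp_mx0 B b : osp_mx B b 0.
Proof. by rewrite /osp_mx trmx0 mul0mx mulmx0 oppr0. Qed.

Lemma in_osp_homogP B b X : homog_mx b X -> in_osp B X <-> osp_mx B b X.
Proof.
move=> hX; rewrite -osp_condP; split.
  case=> X0 [X1 [eX h0 c0 h1 c1]]; rewrite eX in hX *; case: b hX => hX.
    suff -> : X0 = 0 by rewrite add0r.
    apply: homog_mx_eq0 h0 _; rewrite -(addrK X1 X0).
    exact: homog_mxD hX (homog_mxN h1).
  suff -> : X1 = 0 by rewrite addr0.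
  apply: homog_mx_eq0 h1 _; rewrite -(addKr X0 X1).
  exact: homog_mxD (homog_mxN h0) hX.
have osp0 b' : osp_cond B b' 0 by apply/osp_condP/osp_mx0.
case: b hX => hX cX; first by exists 0, X; rewrite add0r; split => //; apply: homog_mx0.
by exists X, 0; rewrite addr0; split => //; apply: homog_mx0.
Qed.

Lemma trmx_prod_osp B m (y : 'I_m -> bool) (Y : 'I_m -> 'M[F]_N) :
  (forall i, homog_mx (y i) (Y i) /\ osp_mx B (y i) (Y i)) ->
  (\prod_i Y i)^T *m B =
    ((-1) ^+ m * (-1) ^+ odd_pairs y) *:
      (sign_mx (odd (\sum_i y i)%N) *m B *m \prod_i Y (rev_ord i)).
Proof.
elim: m y Y => [|m IHm] y Y hY.
  by rewrite !big_ord0 /odd_pairs big_ord0 expr0 mulr1 scale1r sign_mx0 trmx1 mul1mx mulmx1.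
have [hY0 osp_Y0] := hY ord0.
have hYr i := hY (lift ord0 i).
have rev_prod : \prod_(i < m.+1) Y (rev_ord i) = \prod_(i < m) Y (lift ord0 (rev_ord i)) * Y ord0.
  rewrite big_ord_recr; congr (_ * Y _); last by apply: val_inj; rewrite /= subnn.
  apply: eq_bigr => i _; congr Y; apply: val_inj; rewrite /= /bump /=.
  by have := ltn_ord i; lia.
have hW := homog_mx_prod (fun i => (hYr i).1).
have osp_W := IHm _ _ hYr.
rewrite rev_prod !big_ord_recl odd_pairs_recl oddD oddb.
set W := \prod_(i < m) Y (lift ord0 i) in hW osp_W *.
set Wr := \prod_(i < m) Y (lift ord0 (rev_ord i)) in osp_W *.
set S := (\sum_(i < m) y (lift ord0 i))%N in hW osp_W *.
rewrite -[Y ord0 * W]/(Y ord0 *m W) -[Wr * Y ord0]/(Wr *m Y ord0).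
rewrite trmx_mul -(mulmxA W^T) osp_Y0 mulmxN !mulmxA (homog_mx_sign_comm _ (homog_mx_tr hW)).
rewrite -!scalemxAl -(mulmxA _ W^T B) osp_W -!scalemxAr -!scalemxAl !mulmxA -sign_mxD.
rewrite scalerA -scaleNr; congr (_ *: _).
rewrite exprS exprD -(signr_odd _ (_ * S)) oddM oddb andbC.
ring.
Qed.

Lemma in_osp_perm_sum B m (d : 'I_m -> bool) (X : 'I_m -> 'M[F]_N) (a : 'S_m -> F) :
  homog_osp_family B d X ->
  (forall s, a s * ((-1) ^+ m * (-1) ^+ odd_pairs (fun i => d (s i))) =
             - a (rev_perm m * s)%g) ->
  in_osp B (\sum_s a s *: \prod_i X (s i)).
Proof.
move=> hX ha.
have hXs (s : 'S_m) i : homog_mx (d (s i)) (X (s i)) /\ osp_mx B (d (s i)) (X (s i)).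
  by have [hXi ospXi] := hX (s i); split; last exact/(in_osp_homogP _ hXi).
have parity_perm (s : 'S_m) : odd (\sum_i d (s i))%N = odd (\sum_i d i)%N.
  by rewrite [in RHS](reindex_perm s).
have hP : homog_mx (odd (\sum_i d i)%N) (\sum_s a s *: \prod_i X (s i)).
  apply: homog_mx_sum => s; apply: homog_mxZ; rewrite -(parity_perm s).
  by apply: homog_mx_prod => i; case: (hXs s i).
apply/(in_osp_homogP _ hP).
rewrite /osp_mx linear_sum mulmx_suml mulmx_sumr -sumrN.
rewrite [RHS](reindex_inj (mulgI (rev_perm m))); apply: eq_bigr => s _.
rewrite linearZ /= -scalemxAl (trmx_prod_osp (hXs s)) parity_perm scalerA ha.
rewrite -scalemxAr scaleNr; congr (- (_ *: (_ *m _))).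
by apply: eq_bigr => i _; rewrite permM permE.
Qed.

Lemma in_osp_Pm B m (d : 'I_m -> bool) (X : 'I_m -> 'M[F]_N) :
  odd m -> homog_osp_family B d X -> in_osp B (Pm d X).
Proof.
move=> odd_m hX; apply: in_osp_perm_sum hX _ => s.
by rewrite eps_sX_rev_perm -(signr_odd _ m) odd_m mulN1r mulrN.
Qed.

Lemma in_osp_Am B m (d : 'I_m -> bool) (X : 'I_m -> 'M[F]_N) :
  odd 'C(m, 2) = ~~ odd m -> homog_osp_family B d X -> in_osp B (Am d X).
Proof.
move=> odd_bin_m hX; apply: in_osp_perm_sum hX _ => s.
rewrite eps_sX_rev_perm odd_permM signr_addb odd_rev_perm odd_bin_m signrN.
rewrite -(signr_odd _ m).
(* generalized, as ring would otherwise unfold eps_sX *)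
by move: (eps_sX F d s) ((-1) ^+ odd_perm s) ((-1) ^+ odd m) => e a b; ring.
Qed.
End OspAdjoint.

Theorem lemma5p1 (F : fieldType) (hF : [pchar F] =i pred0) (n : nat) (hn : (0 < n)%N)
  (B : 'M[F]_((n.*2).+1)) (hB : osp_form B) (p : nat) :
  [/\ (forall (d : 'I_((p.*2).+1) -> bool) (X : 'I_((p.*2).+1) -> 'M[F]_((n.*2).+1)),
         homog_osp_family B d X -> in_osp B (Pm d X)),
      (forall (d : 'I_((4 * p).+1) -> bool) (X : 'I_((4 * p).+1) -> 'M[F]_((n.*2).+1)),
         homog_osp_family B d X -> in_osp B (Am d X)) &
      (forall (d : 'I_((4 * p).+2) -> bool) (X : 'I_((4 * p).+2) -> 'M[F]_((n.*2).+1)),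
         homog_osp_family B d X -> in_osp B (Am d X))].
Proof.
have four_p : (4 * p = p.*2.*2)%N by rewrite -!mul2n mulnA.
split=> d X.
- by apply: in_osp_Pm; rewrite /= odd_double.
- by apply: in_osp_Am; rewrite odd_bin2 four_p /= uphalf_double !odd_double.
- by apply: in_osp_Am; rewrite odd_bin2 four_p /= half_double !odd_double.
Qed.
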